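(* Let $G$ be a cyclic union of component graphs $G_1,\dots,G_m$, and fix legal parameters $\varepsilon,\delta$; let $W=W(G,\varepsilon,\delta)$ and $W_{G_i}=W(G_i,\varepsilon,\delta)$. Then: (i) If some $G_i$ does not have a full-support fixed point, then $G$ does not have a full-support fixed point. (ii) If all $G_i$ have full-support fixed points, and there exists $j$ such that $G_j$ has uniform in-degree and its full-support fixed point is unstable, then $G$ has a full-support fixed point that is unstable. (iii) If all $G_i$ are cliques, then $W$ has a unique fixed point, which has full support, and this fixed point is unstable. In particular, in all these cases $G$ is not a stable motif.
   Context: For a simple directed graph $H$ on $[h]$ and legal parameters ($\delta>0$, $0<\varepsilon<\frac{\delta}{\delta+1}$), the CTLN $W(H,\varepsilon,\delta)$ is the $h\times h$ matrix with zero diagonal, $W_{ij}=-1+\varepsilon$ if $j\to i$ in $H$, $W_{ij}=-1-\delta$ if $i\ne j$ and $j\not\to i$; its dynamics are $\dot x_i=-x_i+[\sum_jW_{ij}x_j+\theta]_+$ with $\theta>0$. CTLNs are assumed nondegenerate ($\det(I-W_\sigma)\ne0$ for all principal submatrices and all Cramer determinants nonzero). A fixed point $x^*\ge0$ has support $\{i:x^*_i>0\}$; a fixed point with support $\sigma$ is stable iff all eigenvalues of $I-W_\sigma$ have positive real part, otherwise unstable. ''$H$ has a full-support fixed point'' means its CTLN has a fixed point with support all of $[h]$. $H$ is a stable motif if it has a full-support fixed point that is stable. A cyclic union of $G_1,\dots,G_m$ is the graph on the disjoint union of their vertex sets, keeping all edges within each $G_i$, adding all edges from every node of $G_i$ to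 every node of $G_{i+1}$ (indices mod $m$), and no other edges. A graph has uniform in-degree if all its nodes have the same in-degree. A clique is a graph in which every pair of nodes is bidirectionally connected. *)

From HB Require Import structures.
From mathcomp Require Import all_boot all_order all_algebra.
From mathcomp Require Import reals complex.
Set Implicit Arguments. Unset Strict Implicit. Unset Printing Implicit Defensive.
Import Order.TTheory GRing.Theory Num.Theory.
Local Open Scope ring_scope.

(* A directed graph on a finite vertex type V is a relation G : rel V,
   where [G j i] means there is an edge j -> i. *)

Section CTLN.
Variables (R : realType) (V : finType).

Definition simple_graph (G : rel V) : Prop := forall i, G i i = false.

Definition legal_params (eps delta : R) : Prop :=
  0 < delta /\ 0 < eps /\ eps < delta / (delta + 1).

Definition ctln (G : rel V) (eps delta : R) (i j : V) : R :=
  if i == j then 0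
  else if G j i then -1 + eps else -1 - delta.

(* Fixed point of  dx_i/dt = -x_i + [sum_j W_ij x_j + theta]_+ *)
Definition is_fixed_point (W : V -> V -> R) (theta : R) (x : V -> R) : Prop :=
  (forall i, 0 <= x i) /\
  (forall i, x i = Num.max 0 (\sum_j W i j * x j + theta)).

Definition supp (x : V -> R) : {set V} := [set i | 0 < x i].

Definition subW (W : V -> V -> R) (sigma : {set V}) : 'M[R]_#|sigma| :=
  \matrix_(i, j) W (enum_val i) (enum_val j).

(* Cramer matrix: column k of (I - W_sigma) replaced by b_sigma = theta*1 *)
Definition cramer_mx (W : V -> V -> R) (theta : R) (sigma : {set V})
  (k : 'I_#|sigma|) : 'M[R]_#|sigma| :=
  \matrix_(i, j) (if j == k then theta else (1%:M - subW W sigma) i j).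

Definition ctln_nondegenerate (W : V -> V -> R) (theta : R) : Prop :=
  forall sigma : {set V}, sigma != set0 ->
    \det (1%:M - subW W sigma) != 0 /\
    forall k : 'I_#|sigma|, \det (@cramer_mx W theta sigma k) != 0.

End CTLN.

Definition pos_real_part_spectrum (R : rcfType) (n : nat) (M : 'M[R]_n) : Prop :=
  forall z : R[i], eigenvalue (map_mx (fun r : R => (r%:C)%C) M) z -> 0 < complex.Re z.

Section CTLN2.
Variables (R : realType) (V : finType).

Definition stable_fp (W : V -> V -> R) (x : V -> R) : Prop :=
  pos_real_part_spectrum (1%:M - subW W (supp x)).

Definition full_support (x : V -> R) : Prop := forall i, 0 < x i.

Definition has_full_support_fp (G : rel V) (eps delta theta : R) : Prop :=
  exists x, is_fixed_point (ctln G eps delta) theta x /\ full_support x.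

Definition stable_motif (G : rel V) (eps delta theta : R) : Prop :=
  exists x, [/\ is_fixed_point (ctln G eps delta) theta x, full_support x
             & stable_fp (ctln G eps delta) x].

Definition uniform_in_degree (G : rel V) : Prop :=
  exists d : nat, forall i, #|[set j | G j i]| = d.

Definition is_clique (G : rel V) : Prop := forall i j, i != j -> G i j /\ G j i.

End CTLN2.

(* Components of a graph given by a partition map into 'I_m :
   G_k is the induced subgraph on the k-th cu_block. *)
Definition cu_block (V : finType) (m : nat) (part : V -> 'I_m) (k : 'I_m) :=
  {v : V | part v == k}.

Definition cu_component (V : finType) (m : nat) (part : V -> 'I_m) (G : rel V)
  (k : 'I_m) : rel (cu_block part k) :=
  fun a b => G (val a) (val b).

Definition cyclic_union (V : finType) (m : nat) (part : V -> 'I_m) (G : rel V)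
  : Prop :=
  (forall k : 'I_m, exists v, part v = k) /\
  (forall u v, part u != part v ->
     G u v = (val (part v) == (val (part u)).+1 %% m)%N).

Arguments cu_component {V m} part G k.
Arguments cu_block {V m} part k.
Arguments cyclic_union {V m} part G.

From HB Require Import structures.
From mathcomp Require Import all_boot all_order all_algebra.
From mathcomp Require Import reals complex.
From mathcomp Require Import ring lra zify.
Import Order.TTheory GRing.Theory Num.Theory.
Local Open Scope ring_scope.
Set Implicit Arguments. Unset Strict Implicit. Unset Printing Implicit Defensive.

(* Cross-block weights of a cyclic union depend only on the two blocks involved, so on block k
   the fixed-point equations of W restrict to those of W_(G_k) with theta raised by an input
   that is constant on the block: rescaling gives (i).  Conversely, full-support fixed points
   of the G_k glue into one of G once the blocks are weighted by positive numbers solving a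
   cyclic linear system, whose coefficients lie in (0,1) because (1 - eps) S < theta < (1 + delta) S
   for the total activity S of any full-support fixed point.
   A left eigenvector of I - W_(G_j) with zero sum extends by zero to one of I - W; when G_j has
   uniform in-degree, every eigenvalue other than the (positive) common row sum has such an
   eigenvector, which transfers the instability in (ii).
   For cliques, left eigenvectors of the m x m quotient matrix Q of I - W lift to I - W, and
   tr(Q)^2 <= tr(Q^2) (from m > 2 and the bound on eps) rules out a spectrum in the open right
   half-plane.  Every fixed point has full support by a boundary argument around the cycle, so
   nondegeneracy of I - W gives uniqueness. *)

Section TraceCriterion.

Lemma mxtrace_trig_sqr (K : comNzRingType) n (T : 'M[K]_n) : is_trig_mx T ->
  \tr (T *m T) = \sum_i T i i ^+ 2.
Proof.
move=> Ttrig; apply: eq_bigr => i _; rewrite mxE (bigD1 i) //= big1 ?addr0 ?expr2 //.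
move=> j /negPf ji; case: (ltngtP i j) => [ij|ji'|/val_inj eij]; last by rewrite eij eqxx in ji.
  by rewrite (is_trig_mxP Ttrig i j ij) mul0r.
by rewrite (is_trig_mxP Ttrig j i ji') mulr0.
Qed.

Lemma eigenvalue_trig_diag (F : fieldType) n (T : 'M[F]_n) i :
  is_trig_mx T -> eigenvalue T (T i i).
Proof.
move=> Ttrig; rewrite eigenvalue_root_char char_poly_trig // rootE horner_prod.
by apply/eqP; rewrite (bigD1 i) //= hornerXsubC subrr mul0r.
Qed.

Lemma sum_sqr_lt_sqr_sum (R : realFieldType) n (x : 'I_n -> R) : (1 < n)%N ->
  (forall i, 0 < x i) -> \sum_i x i ^+ 2 < (\sum_i x i) ^+ 2.
Proof.
move=> n_gt1 xpos; have n_gt0 : (0 < n)%N by apply: ltnW.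
pose i0 := Ordinal n_gt0; pose i1 := Ordinal n_gt1.
have x_lt_sum i : x i < \sum_j x j.
  have [j ji] : exists j, j != i.
    have [->|] := eqVneq i i0; last by exists i0; rewrite eq_sym.
    by exists i1; apply/eqP => /(congr1 val).
  rewrite (bigD1 i) //= ltrDl (bigD1 j) // ltr_pwDl ?xpos //.
  by rewrite sumr_ge0 // => k _; apply: ltW.
rewrite expr2 mulr_suml; apply: ltr_sum => [|i _].
  by apply/hasP; exists i0; rewrite ?mem_index_enum.
by rewrite expr2 ltr_pM2l.
Qed.

Lemma mxtrace_sqr_le (R : numDomainType) n (Q : 'M[R]_n) :
  (forall k l, k != l -> Q k k * Q l l <= Q k l * Q l k) -> \tr Q ^+ 2 <= \tr (Q *m Q).
Proof.
move=> Qoffdiag; rewrite expr2 mulr_suml; apply: ler_sum => k _.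
rewrite mulr_sumr mxE; apply: ler_sum => l _.
by have [<-|kl] := eqVneq k l; [rewrite lexx | apply: Qoffdiag].
Qed.

Variable R : rcfType.

Lemma Re_sum (I : finType) (F : I -> R[i]) :
  complex.Re (\sum_i F i) = \sum_i complex.Re (F i).
Proof. by apply: big_morph => // -[a b] [c d]. Qed.

Lemma Re_sqr_le (z : R[i]) : complex.Re (z ^+ 2) <= complex.Re z ^+ 2.
Proof. by case: z => a b; rewrite !expr2 /=; nra. Qed.

(* Triangularizing over C, tr M is the sum of the real parts x_i of the eigenvalues z_i and
   tr (M M) the sum of the Re (z_i^2) <= x_i^2; if all x_i > 0 then
   (tr M)^2 > sum x_i^2 >= tr (M M). *)
Lemma trace_sqr_not_pos_spectrum n (M : 'M[R]_n) : (1 < n)%N ->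
  \tr M ^+ 2 <= \tr (M *m M) -> ~ pos_real_part_spectrum M.
Proof.
move=> n_gt1 trM posM; pose A := map_mx (fun r : R => (r%:C)%C) M.
have [P Punitary] := Schur A (ltnW n_gt1).
have Punit : P \in unitmx by apply: unitarymx_unit.
have Pfree : row_free P by rewrite row_free_unit.
rewrite /similar_to conjumx // => Ttrig; set T := P *m A *m invmx P in Ttrig.
have trT : \tr T = \tr A by rewrite /T mxtrace_mulC mulmxA mulVmx // mul1mx.
have trT2 : \tr (T *m T) = \tr (A *m A).
  by rewrite /T !mulmxA mulmxKV // mxtrace_mulC !mulmxA mulVmx // mul1mx.
pose x i := complex.Re (T i i).
have xpos i : 0 < x i.
  apply: posM; have /(_ (T i i)) := eigenvalue_conjmx (stablemx_unit A Punit) Pfree.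
  by rewrite conjumx //; apply; apply: eigenvalue_trig_diag.
have trM_x : \tr M = \sum_i x i by rewrite -Re_sum -/(mxtrace T) trT trace_map_mx.
have trM2_x : \tr (M *m M) <= \sum_i x i ^+ 2.
  rewrite -[\tr (M *m M)]/(complex.Re ((\tr (M *m M))%:C)%C) -trace_map_mx map_mxM -/A -trT2.
  by rewrite mxtrace_trig_sqr // Re_sum; apply: ler_sum => i _; apply: Re_sqr_le.
by have := sum_sqr_lt_sqr_sum n_gt1 xpos; rewrite -trM_x; lra.
Qed.

End TraceCriterion.


Section LeftEigenvalues.
Variables (R : realType) (T : finType).

Definition left_eigenvalue (A : T -> T -> R) (l : R[i]) : Prop :=
  exists2 u : T -> R[i], exists t, u t != 0 &
    forall c, \sum_t u t * (A t c)%:C%C = l * u c.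

Definition IminusW (W : T -> T -> R) (i j : T) : R := (i == j)%:R - W i j.

Local Notation idx t := (enum_rank_in (in_setT t) t).

Lemma enum_rank_setTK (t : T) : enum_val (idx t) = t.
Proof. by rewrite enum_rankK_in ?in_setT. Qed.

Lemma sum_setT_enum (K : nmodType) (F : T -> K) :
  \sum_t F t = \sum_(i < #|[set: T]|) F (enum_val i).
Proof. by rewrite -big_enum_val; apply: eq_bigl => t; rewrite inE. Qed.

Lemma eigenvalue_IminusW (W : T -> T -> R) l :
  eigenvalue (map_mx (fun r : R => r%:C%C) (1%:M - subW W [set: T])) l <->
  left_eigenvalue (IminusW W) l.
Proof.
split.
- case/eigenvalueP => v vM /matrix0Pn[i0 [j vj]]; rewrite [i0]ord1 in vj.
  exists (fun t => v 0 (idx t)) => [|c].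
    by exists (enum_val j); rewrite (enum_valK_in (in_setT (enum_val j))).
  have /rowP/(_ (idx c)) := vM; rewrite !mxE => <-.
  rewrite sum_setT_enum; apply: eq_bigr => i _.
  rewrite !mxE /IminusW (enum_valK_in (in_setT (enum_val i))).
  by rewrite -(inj_eq enum_val_inj) enum_rank_setTK.
- case=> u [t ut] uA; apply/eigenvalueP; exists (\row_i u (enum_val i)).
    apply/rowP => j; rewrite !mxE -uA sum_setT_enum.
    by apply: eq_bigr => i _; rewrite !mxE /IminusW (inj_eq enum_val_inj).
  by apply/eqP => /rowP/(_ (idx t)); rewrite !mxE enum_rank_setTK => ut0; rewrite ut0 eqxx in ut.
Qed.

Lemma left_eigenvalue_rowsum (A : T -> T -> R) (r : R) l u :
  (forall t, \sum_c A t c = r) -> (forall c, \sum_t u t * (A t c)%:C%C = l * u c) ->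
  l != r%:C%C -> \sum_t u t = 0.
Proof.
move=> Arow uA l_neq_r; apply/eqP.
have : (l - r%:C%C) * \sum_t u t == 0.
  rewrite mulrBl subr_eq0 mulr_sumr; under eq_bigr do rewrite -uA.
  rewrite exchange_big mulr_sumr /=; apply/eqP/eq_bigr => t _.
  by rewrite -mulr_sumr -raddf_sum Arow mulrC.
by rewrite mulf_eq0 subr_eq0 (negPf l_neq_r).
Qed.

Lemma quotient_left_eigenvalue m (p : T -> 'I_m) (A : T -> T -> R) (Q : 'M[R]_m) l :
  (forall k, exists v, p v = k) ->
  (forall k c, \sum_(v | p v == k) A v c = Q k (p c)) ->
  eigenvalue (map_mx (fun r : R => r%:C%C) Q) l -> left_eigenvalue A l.
Proof.
move=> p_onto Qsum /eigenvalueP[beta betaQ /matrix0Pn[i0 [k bk]]]; rewrite [i0]ord1 in bk.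
exists (fun v => beta 0 (p v)) => [|c]; first by have [v vk] := p_onto k; exists v; rewrite vk.
rewrite (partition_big p predT) //=; have /rowP/(_ (p c)) := betaQ; rewrite !mxE => <-.
apply: eq_bigr => k' _; rewrite !mxE -Qsum raddf_sum mulr_sumr.
by apply: eq_bigr => v /eqP->.
Qed.

End LeftEigenvalues.

Lemma stable_fp_full (R : realType) (T : finType) (W : T -> T -> R) x :
  full_support x ->
  stable_fp W x <-> forall l, left_eigenvalue (IminusW W) l -> 0 < complex.Re l.
Proof.
move=> x_full; rewrite /stable_fp.
have -> : supp x = [set: T] by apply/setP => i; rewrite !inE x_full.
by split=> Wstable l /eigenvalue_IminusW; apply: Wstable.
Qed.


Section CyclicOrdinals.
Variable m : nat.
Implicit Types k l : 'I_m.

Lemma val_iter_ordS k n : val (iter n (@ordS m) k) = ((k + n) %% m)%N.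
Proof.
elim: n => [|n IHn] /=; first by rewrite addn0 modn_small.
by rewrite IHn -[((_ %% m).+1)%N]addn1 modnDml addn1 addnS.
Qed.

Lemma succ_ordE k l : (val k == (val l).+1 %% m)%N = (l == ord_pred k).
Proof.
rewrite -[((val l).+1 %% m)%N]/(val (ordS l)) val_eqE.
by apply/eqP/eqP => [->|->]; [rewrite ordSK | rewrite ord_predK].
Qed.

Lemma iter_ordS_neq k n : (0 < n < m)%N -> iter n (@ordS m) k != k.
Proof.
case/andP=> n_gt0 n_lt_m; rewrite -val_eqE val_iter_ordS /=.
rewrite -[X in _ != X](modn_small (ltn_ord k)) -[X in _ != (X %% m)%N]addn0.
by rewrite eqn_modDl mod0n modn_small // -lt0n.
Qed.

Lemma ord_pred_neq k : (1 < m)%N -> ord_pred k != k.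
Proof.
move=> m_gt1; apply/eqP => pk; have := @iter_ordS_neq k 1 m_gt1.
by rewrite /= -{1}pk ord_predK eqxx.
Qed.

Lemma ord_pred2_neq k : (2 < m)%N -> ord_pred (ord_pred k) != k.
Proof.
move=> m_gt2; apply/eqP => ppk; have := @iter_ordS_neq k 2 m_gt2.
by rewrite /= -{1}ppk !ord_predK eqxx.
Qed.

Lemma cyclic_boundary (P : pred 'I_m) : (exists k, P k) -> (exists k, ~~ P k) ->
  exists k, P k && ~~ P (ord_pred k).
Proof.
move=> [k1 Pk1] [k0 nPk0]; apply/existsP; apply: contraT => /existsPn noboundary.
have nP_ordS j : ~~ P j -> ~~ P (ordS j).
  by move=> nPj; apply: contra (noboundary (ordS j)) => ->; rewrite ordSK.
have nP_iter n : ~~ P (iter n (@ordS m) k0) by elim: n => //= n; apply: nP_ordS.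
have k0_to_k1 : iter (m - k0 + k1) (@ordS m) k0 = k1.
  apply: val_inj; rewrite val_iter_ordS addnA subnKC; last exact: ltnW.
  by rewrite modnDl modn_small.
by have := nP_iter (m - k0 + k1)%N; rewrite k0_to_k1 Pk1.
Qed.

End CyclicOrdinals.


Section CyclicSystem.
Variable R : realFieldType.

Definition dist01 (t : R) : R := if t < 0 then - t else if t <= 1 then 0 else t - 1.

Lemma dist01_le0 t : dist01 t <= 0 -> 0 <= t <= 1.
Proof.
rewrite /dist01; case: (ltrP t 0) => t0 d0; first by apply/andP; split; lra.
by case: (lerP t 1) => t1 in d0 *; apply/andP; split; lra.
Qed.

Lemma dist01_contract r t : 0 < r < 1 -> dist01 (1 - r * t) <= r * dist01 t.
Proof.
case/andP=> r_gt0 r_lt1; rewrite /dist01.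
case: (ltrP t 0) => ?; [|case: (lerP t 1) => ?];
  by case: (ltrP (1 - r * t) 0) => ?; case: (lerP (1 - r * t) 1) => ?; nra.
Qed.

Variables (m : nat) (r : 'I_m -> R).
Hypothesis r01 : forall k, 0 < r k < 1.

Definition cyclic_mx : 'M[R]_m :=
  \matrix_(j, k) ((j == k)%:R * r k + (j == ord_pred k)%:R).

Lemma mul_cyclic_mx (u : 'rV_m) k : (u *m cyclic_mx) 0 k = r k * u 0 k + u 0 (ord_pred k).
Proof.
rewrite !mxE; under eq_bigr do rewrite mxE mulrDr.
rewrite big_split /= (bigD1 k) //= [X in _ + X](bigD1 (ord_pred k)) //= !eqxx.
rewrite !big1 ?addr0 => [|j /negPf->|j /negPf->]; rewrite ?mulr0n ?mul0r ?mulr0 //.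
by rewrite mulr1 mul1r mulrC.
Qed.

Lemma cyclic_mx_unit : (0 < m)%N -> cyclic_mx \in unitmx.
Proof.
move=> m_gt0; rewrite unitmxE unitfE; apply/negP => /det0P [u u_neq0 uN].
suff : u = 0 by move/eqP: u_neq0.
(* at a coordinate of maximal modulus, |u_j| = r_(j+1) |u_(j+1)| <= r_(j+1) |u_j| *)
have [j _ jmax] := @arg_maxP _ _ _ (Ordinal m_gt0) predT (fun k => `|u 0 k|) erefl.
have /andP[r_gt0 r_lt1] := r01 (ordS j).
have := mul_cyclic_mx u (ordS j); rewrite uN ordSK mxE => /esym/eqP.
rewrite addr_eq0 => /eqP/(congr1 Num.norm); rewrite normrN normrM gtr0_norm // => uj.
have uj0 : `|u 0 j| <= 0.
  by have := jmax (ordS j) erefl; have := normr_ge0 (u 0 j); rewrite /=; nra.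
apply/rowP => k; rewrite mxE; apply/eqP; rewrite -normr_le0.
exact: le_trans (jmax k erefl) uj0.
Qed.

Lemma cyclic_system_solution : (1 < m)%N ->
  exists w : 'I_m -> R, [/\ forall k, 0 < w k,
    forall k, r k * w k + w (ord_pred k) = 1 & 1 < \sum_k w k].
Proof.
move=> m_gt1; have m_gt0 : (0 < m)%N by apply: ltnW.
pose w k := ((const_mx 1 : 'rV[R]_m) *m invmx cyclic_mx) 0 k.
have w_eq k : r k * w k + w (ord_pred k) = 1.
  by rewrite -mul_cyclic_mx mulmxKV ?cyclic_mx_unit // mxE.
(* dist01 is contracted along the cycle, so it vanishes at its maximum *)
have [j _ jmax] := @arg_maxP _ _ _ (Ordinal m_gt0) predT (dist01 \o w) erefl.
have w01 k : 0 <= w k <= 1.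
  apply/dist01_le0/(le_trans (jmax k erefl)) => /=.
  have := dist01_contract (w (ordS j)) (r01 (ordS j)).
  rewrite -(w_eq (ordS j)) addrC addKr ordSK => contr.
  have := jmax (ordS j) erefl; have /andP[? ?] := r01 (ordS j); rewrite /=; nra.
have w_gt0 k : 0 < w k.
  have := w_eq (ordS k); rewrite ordSK; have := w01 (ordS k); have := r01 (ordS k).
  by case/andP=> ? ? /andP[? ?]; nra.
exists w; split => //.
have sum_w_pred : \sum_k w (ord_pred k) = \sum_k w k.
  by rewrite [RHS](reindex_inj (can_inj (@ord_predK m))).
have sum_rw : \sum_k r k * w k < \sum_k w k.
  apply: ltr_sum => [|k _]; first by apply/hasP; exists (Ordinal m_gt0); rewrite ?mem_index_enum.
  by have /andP[_ ?] := r01 k; rewrite gtr_pMl.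
have : \sum_k (r k * w k + w (ord_pred k)) = m%:R.
  by under eq_bigr do rewrite w_eq; rewrite sumr_const card_ord.
rewrite big_split /= sum_w_pred; have : 2 <= m%:R :> R by rewrite (ler_nat R 2 m).
lra.
Qed.

End CyclicSystem.


Section CTLNBasics.
Variables (R : realType) (T : finType).
Implicit Types (W : T -> T -> R) (x y : T -> R) (G : rel T).

Lemma legal_paramsP (eps delta : R) : legal_params eps delta ->
  [/\ 0 < delta, 0 < eps, eps < 1 & eps * (delta + 1) < delta].
Proof.
case=> delta_gt0 [eps_gt0 eps_lt].
have : eps * (delta + 1) < delta by rewrite -ltr_pdivlMr // addr_gt0.
by split=> //; nra.
Qed.

Lemma full_fpP W theta x : full_support x ->
  is_fixed_point W theta x <-> forall v, x v = \sum_j W v j * x j + theta.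
Proof.
move=> x_full; split=> [[_ xfix] v | xeq].
  move: (x_full v) (xfix v); case: (lerP 0 (\sum_j W v j * x j + theta)) => // _ x_gt0 x0.
  by rewrite x0 ltxx in x_gt0.
split=> v; first exact: ltW.
by rewrite -xeq; case: lerP => // xv_lt0; have := x_full v; rewrite ltNge ltW.
Qed.

Lemma fp_scale W t s x : 0 < s ->
  is_fixed_point W t x -> is_fixed_point W (s * t) (fun v => s * x v).
Proof.
move=> s_gt0 [x_ge0 xfix]; split=> v; first exact: mulr_ge0 (ltW s_gt0) (x_ge0 v).
rewrite xfix maxr_pMr ?ltW // mulr0 mulrDr mulr_sumr.
by congr (Num.max _ (_ + _)); apply: eq_bigr => j _; rewrite mulrCA.
Qed.

Lemma sum_IminusW W t : \sum_c IminusW W t c = 1 - \sum_c W t c.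
Proof.
rewrite sumrB (bigD1 t) //= eqxx big1 ?addr0 // => c ct.
by rewrite eq_sym (negPf ct).
Qed.

Lemma full_fp_unique W theta x y : ctln_nondegenerate W theta ->
  is_fixed_point W theta x -> full_support x ->
  is_fixed_point W theta y -> full_support y -> forall v, y v = x v.
Proof.
move=> Wnd xfix x_full yfix y_full v.
have xeq := (full_fpP _ _ x_full).1 xfix; have yeq := (full_fpP _ _ y_full).1 yfix.
have setT_neq0 : [set: T] != set0 by apply/set0Pn; exists v; rewrite inE.
have [detW _] := Wnd _ setT_neq0.
have d_fix u : x u - y u = \sum_j W u j * (x j - y j).
  rewrite xeq yeq opprD addrACA subrr addr0 -sumrB.
  by apply: eq_bigr => j _; rewrite mulrBr.
pose d : 'cV[R]_#|[set: T]| := \col_i (x (enum_val i) - y (enum_val i)).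
have Ad : (1%:M - subW W [set: T]) *m d = 0.
  apply/colP => i; rewrite !mxE; under eq_bigr do rewrite !mxE mulrBl.
  rewrite sumrB (bigD1 i) //= eqxx mul1r big1 ?addr0 => [|j ji].
    by rewrite d_fix sum_setT_enum subrr.
  by rewrite eq_sym (negPf ji) mul0r.
have Wunit : 1%:M - subW W [set: T] \in unitmx by rewrite unitmxE unitfE.
have d0 : d = 0 by rewrite -(mulKmx Wunit d) Ad mulmx0.
have /colP/(_ (enum_rank_in (in_setT v) v)) := d0.
by rewrite !mxE enum_rankK_in ?in_setT // => /eqP; rewrite subr_eq0 => /eqP.
Qed.

Variables (G : rel T) (eps delta theta : R).
Hypotheses (params : legal_params eps delta) (theta_gt0 : 0 < theta).
Local Notation W := (ctln G eps delta).

Lemma ctln_offdiag i j : i != j -> -1 - delta <= W i j <= -1 + eps.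
Proof.
have [delta_gt0 eps_gt0 _ _] := legal_paramsP params.
by rewrite /ctln => /negPf->; case: (G j i); apply/andP; split; lra.
Qed.

Lemma ctln_le0 i j : W i j <= 0.
Proof.
have [-> | ij] := eqVneq i j; first by rewrite /ctln eqxx.
have [_ _ eps_lt1 _] := legal_paramsP params.
by have /andP[_] := ctln_offdiag ij; lra.
Qed.

Lemma ctln_rowsum_uniform : simple_graph G -> uniform_in_degree G ->
  forall t t', \sum_c W t c = \sum_c W t' c.
Proof.
move=> Gsimple [d Gindeg].
suff rowsum t : \sum_c W t c = (-1 - delta) *+ #|T|.-1 + (delta + eps) *+ d.
  by move=> t t'; rewrite !rowsum.
rewrite (bigD1 t) //= {1}/ctln eqxx add0r.
have Wtc c : c != t -> W t c = (-1 - delta) + (G c t)%:R * (delta + eps).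
  by rewrite /ctln eq_sym => /negPf->; case: (G c t); rewrite ?mul1r ?mul0r; lra.
rewrite (eq_bigr _ Wtc) big_split /= sumr_const cardC1 -mulr_suml; congr (_ + _).
rewrite -(Gindeg t) -sum1_card -mulr_natl natr_sum; congr (_ * _).
rewrite big_mkcond [RHS]big_mkcond; apply: eq_bigr => c _; rewrite inE.
by have [->|_] := eqVneq c t; [rewrite Gsimple | case: (G c t)].
Qed.

(* Read the fixed-point equation at one vertex t0: the other weights lie in [-1-delta, -1+eps]. *)
Lemma full_fp_mass_bounds (t0 : T) x : is_fixed_point W theta x -> full_support x ->
  (1 - eps) * \sum_t x t < theta < (1 + delta) * \sum_t x t.
Proof.
move=> xfix x_full; have [delta_gt0 eps_gt0 _ _] := legal_paramsP params.
have x_t0 := (full_fpP _ _ x_full).1 xfix t0.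
rewrite (bigD1 t0) //= {1}/ctln eqxx mul0r add0r in x_t0.
rewrite (bigD1 t0) //=; move: x_t0.
set S := \sum_(t | t != t0) x t; set WS := \sum_(t | t != t0) _ => x_t0.
have S_ge0 : 0 <= S by apply: sumr_ge0 => t _; apply: ltW.
have WS_bounds : (-1 - delta) * S <= WS <= (-1 + eps) * S.
  rewrite /S !mulr_sumr; apply/andP; split; apply: ler_sum => t;
    by rewrite eq_sym ler_pM2r // => /ctln_offdiag/andP[].
have := x_full t0; case/andP: WS_bounds; nra.
Qed.

Lemma clique_full_fp : is_clique G -> (0 < #|T|)%N -> has_full_support_fp G eps delta theta.
Proof.
move=> Gclique T_gt0; have [_ eps_gt0 eps_lt1 _] := legal_paramsP params.
pose n : R := #|T|%:R; have n_ge1 : 1 <= n by rewrite ler1n.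
have den_gt0 : 0 < eps + (1 - eps) * n by nra.
pose y := theta / (eps + (1 - eps) * n); have y_gt0 : 0 < y by apply: divr_gt0.
exists (fun=> y); split; last by [].
apply/full_fpP => // t; rewrite -mulr_suml (bigD1 t) //= {1}/ctln eqxx add0r.
rewrite (eq_bigr (fun=> -1 + eps)) => [|j jt]; last first.
  have [_ Gjt] : G t j /\ G j t by apply: Gclique; rewrite eq_sym.
  by rewrite /ctln eq_sym (negPf jt) Gjt.
rewrite sumr_const -mulr_natr cardC1.
have n1 : n = #|T|.-1%:R + 1 by rewrite /n natr1 prednK.
have : y * (eps + (1 - eps) * n) = theta by rewrite /y divfK ?gt_eqF.
by rewrite n1; nra.
Qed.

End CTLNBasics.


Section CyclicUnion.
Variables (R : realType) (V : finType) (m : nat) (part : V -> 'I_m) (G : rel V)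
  (eps delta theta : R).
Hypotheses (Gcu : cyclic_union part G) (params : legal_params eps delta)
  (theta_gt0 : 0 < theta).

Local Notation W := (ctln G eps delta).
Local Notation B k := (cu_block part k).
Local Notation Gk k := (cu_component part G k).
Local Notation Wk k := (ctln (cu_component part G k) eps delta).

Definition cross_weight (l k : 'I_m) : R :=
  if val k == ((val l).+1 %% m)%N then -1 + eps else -1 - delta.

Lemma cross_weightE l k :
  cross_weight l k = -1 - delta + (l == ord_pred k)%:R * (delta + eps).
Proof. by rewrite /cross_weight succ_ordE; case: (l == ord_pred k); rewrite ?mul1r ?mul0r; lra. Qed.

Lemma ctln_cross i j : part i != part j -> W i j = cross_weight (part j) (part i).
Proof.
move=> ij; rewrite /ctln /cross_weight Gcu.2 1?eq_sym //.
by rewrite ifF //; apply: contraNF ij => /eqP->.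
Qed.

Lemma ctln_component k (a b : B k) : Wk k a b = W (val a) (val b).
Proof. by rewrite /ctln /cu_component -val_eqE. Qed.

Lemma part_val k (b : B k) : part (val b) = k.
Proof. exact/eqP/(valP b). Qed.

Lemma card_block_gt0 k : (0 < #|{: B k}|)%N.
Proof. by have [v vk] := Gcu.1 k; apply/card_gt0P; exists (exist _ v (introT eqP vk)). Qed.

Lemma sum_block (K : nmodType) k (F : V -> K) :
  \sum_(b : B k) F (val b) = \sum_(v | part v == k) F v.
Proof. by rewrite (big_sub [pred v | part v == k]). Qed.

Lemma sum_blocks (K : nmodType) (F : V -> K) :
  \sum_v F v = \sum_l \sum_(b : B l) F (val b).
Proof. by rewrite (partition_big part predT) //=; apply: eq_bigr => l _; rewrite sum_block. Qed.

Definition block_mass k (y : V -> R) : R := \sum_(b : B k) y (val b).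

Definition block_input k (y : V -> R) : R :=
  \sum_(l | l != k) cross_weight l k * block_mass l y.

Lemma ctln_row_blocks k v y : part v = k ->
  \sum_j W v j * y j = \sum_(b : B k) W v (val b) * y (val b) + block_input k y.
Proof.
move=> vk; rewrite sum_blocks (bigD1 k) //=; congr (_ + _).
apply: eq_bigr => l lk; rewrite /block_mass mulr_sumr; apply: eq_bigr => b _.
by rewrite ctln_cross part_val ?vk // eq_sym.
Qed.

Lemma block_inputE k y : (1 < m)%N -> block_input k y =
  (-1 - delta) * (\sum_l block_mass l y - block_mass k y)
  + (delta + eps) * block_mass (ord_pred k) y.
Proof.
move=> m_gt1; rewrite /block_input [in RHS](bigD1 k) //= addrC addrK mulr_sumr.
under eq_bigr do rewrite cross_weightE mulrDl.
rewrite big_split /=; congr (_ + _).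
rewrite (bigD1 (ord_pred k)) ?ord_pred_neq //= eqxx mul1r big1 ?addr0 //.
by move=> l /andP[_ /negPf->]; rewrite !mul0r.
Qed.

Lemma component_fp k X t : (forall b : B k, 0 < X (val b)) ->
  (forall b : B k, X (val b) = \sum_(c : B k) W (val b) (val c) * X (val c) + t) ->
  is_fixed_point (Wk k) t (fun b => X (val b)).
Proof.
move=> X_gt0 Xeq; apply/(full_fpP _ _ (X_gt0 : full_support _)) => b; rewrite Xeq.
by congr (_ + _); apply: eq_bigr => c _; rewrite ctln_component.
Qed.

Lemma component_full_fp k :
  has_full_support_fp G eps delta theta -> has_full_support_fp (Gk k) eps delta theta.
Proof.
case=> x [xfix x_full]; pose t := theta + block_input k x.
have xk_fix : is_fixed_point (Wk k) t (fun b => x (val b)).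
  apply: (@component_fp k x t) => [b|b]; first exact: x_full.
  have xeq := (full_fpP W theta x_full).1 xfix.
  by rewrite {1}xeq (ctln_row_blocks _ (part_val b)) /t addrAC addrA.
have t_gt0 : 0 < t.
  have /card_gt0P[b _] := card_block_gt0 k.
  have := (full_fpP _ _ (fun b : B k => x_full (val b))).1 xk_fix b; have := x_full (val b).
  have : \sum_j Wk k b j * x (val j) <= 0.
    by apply: sumr_le0 => c _; rewrite mulr_le0_ge0 ?(ctln_le0 _ params) ?ltW.
  lra.
exists (fun b => theta / t * x (val b)); split=> [|b]; last by rewrite mulr_gt0 ?divr_gt0.
by have := fp_scale (divr_gt0 theta_gt0 t_gt0) xk_fix; rewrite divfK ?gt_eqF.
Qed.

Definition block_fp (X : V -> R) : Prop :=
  forall k (b : B k), X (val b) = \sum_(c : B k) W (val b) (val c) * X (val c) + theta.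

Lemma block_fp_of_components :
  (forall k, has_full_support_fp (Gk k) eps delta theta) ->
  exists2 X : V -> R, forall v, 0 < X v & block_fp X.
Proof.
move=> /fin_all_exists[xs xsP]; pose X v := xs (part v) (exist _ v (eqxx (part v))).
have XE k (b : B k) : X (val b) = xs k b.
  case: b => v vk /=; have e : part v = k by apply/eqP.
  by subst k; rewrite /X (bool_irrelevance vk (eqxx _)).
exists X => [v|k b]; first by case: (xsP (part v)) => _; apply.
have [xfix x_full] := xsP k; rewrite XE ((full_fpP _ _ x_full).1 xfix b).
by congr (_ + _); apply: eq_bigr => c _; rewrite ctln_component XE.
Qed.

Lemma block_mass_bounds X k : (forall v, 0 < X v) -> block_fp X ->
  (1 - eps) * block_mass k X < theta < (1 + delta) * block_mass k X.
Proof.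
move=> X_gt0 Xfp; have /card_gt0P[b0 _] := card_block_gt0 k.
have Xk_full : full_support (fun b : B k => X (val b)) by move=> b.
exact: (full_fp_mass_bounds params b0 (component_fp Xk_full (Xfp k)) Xk_full).
Qed.

Lemma block_mass_scale (a : 'I_m -> R) X l :
  block_mass l (fun v => a (part v) * X v) = a l * block_mass l X.
Proof. by rewrite /block_mass mulr_sumr; apply: eq_bigr => b _; rewrite part_val. Qed.

Lemma glue_block_fps X (a : 'I_m -> R) : (forall v, 0 < X v) -> block_fp X ->
  (forall k, 0 < a k) ->
  (forall k, block_input k (fun v => a (part v) * X v) = (a k - 1) * theta) ->
  has_full_support_fp G eps delta theta.
Proof.
move=> X_gt0 Xfp a_gt0 balance; pose x v := a (part v) * X v.
have x_full : full_support x by move=> v; apply: mulr_gt0.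
exists x; split=> //; apply/(full_fpP _ _ x_full) => v.
rewrite (ctln_row_blocks _ (erefl (part v))) balance /x.
rewrite (Xfp _ (exist _ v (eqxx (part v)))) /=.
have -> : \sum_(c : B (part v)) W v (val c) * (a (part (val c)) * X (val c)) =
          a (part v) * \sum_(c : B (part v)) W v (val c) * X (val c).
  by rewrite mulr_sumr; apply: eq_bigr => c _; rewrite part_val mulrCA.
ring.
Qed.

(* The block weights a_k = C z_k / S_k make the inputs between blocks balance; the z_k solve
   a cyclic system whose coefficients lie in (0,1) thanks to block_mass_bounds. *)
Lemma full_fp_of_block_fp X : (forall v, 0 < X v) -> block_fp X ->
  has_full_support_fp G eps delta theta.
Proof.
move=> X_gt0 Xfp; have [m_le1 | m_gt1] := leqP m 1.
  apply: (glue_block_fps (a := fun=> 1)) => // k.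
  rewrite subrr mul0r /block_input big_pred0 // => l.
  by apply/negbTE; rewrite negbK; apply/eqP/ord_inj; have := ltn_ord k; have := ltn_ord l; lia.
have [delta_gt0 eps_gt0 eps_lt1 _] := legal_paramsP params.
pose S k := block_mass k X; pose b := delta + eps; pose rho k := 1 + delta - theta / S k.
have S_gt0 k : 0 < S k.
  have /andP[_ hi] := block_mass_bounds k X_gt0 Xfp.
  by rewrite -(pmulr_rgt0 _ (addr_gt0 ltr01 delta_gt0)); apply: lt_trans hi.
have rho01 k : 0 < rho k / b < 1.
  have /andP[lo hi] := block_mass_bounds k X_gt0 Xfp.
  rewrite -(ltr_pdivlMr _ _ (S_gt0 k)) in lo; rewrite -(ltr_pdivrMr _ _ (S_gt0 k)) in hi.
  have b_gt0 : 0 < b by rewrite addr_gt0.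
  by rewrite ltr_pdivrMr // mul1r divr_gt0 //= /rho /b; lra.
have [w [w_gt0 w_eq w_sum]] := cyclic_system_solution rho01 m_gt1.
pose z k := w k / b; pose Z := \sum_k z k; pose D := (1 + delta) * Z - 1.
have D_gt0 : 0 < D.
  have : 1 < b * Z by rewrite /Z /z -mulr_suml mulrCA divff ?mulr1 ?gt_eqF ?addr_gt0.
  have : 0 < Z by rewrite /Z /z -mulr_suml divr_gt0 ?addr_gt0 // (lt_trans ltr01 w_sum).
  rewrite /D /b; nra.
pose C := theta / D; pose a k := C * z k / S k.
apply: (glue_block_fps (a := a)) => // [k|k].
  apply: divr_gt0 (S_gt0 k); apply: mulr_gt0; first exact: divr_gt0.
  by apply: divr_gt0 (w_gt0 k) _; rewrite addr_gt0.
have aS l : a l * S l = C * z l by rewrite /a divfK ?gt_eqF.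
rewrite block_inputE //; under eq_bigr do rewrite block_mass_scale aS.
rewrite !block_mass_scale !aS -mulr_sumr -/Z.
have key : rho k * z k + b * z (ord_pred k) = 1.
  by rewrite -(w_eq k) /z mulrA mulrAC mulrCA divff ?mulr1 ?gt_eqF ?addr_gt0.
have CD : C * D = theta by rewrite /C divfK ?gt_eqF.
have aq : a k * theta = C * z k * (theta / S k) by rewrite /a mulrAC -mulrA.
move: key CD aq; rewrite /rho /D /b; set q := theta / S k => key CD aq.
have /= Ckey := congr1 (fun t => C * t) key.
rewrite [in RHS]mulrBl mul1r aq -CD.
lra.
Qed.

Lemma full_fp_of_components :
  (forall k, has_full_support_fp (Gk k) eps delta theta) -> has_full_support_fp G eps delta theta.
Proof. by move=> /block_fp_of_components[X X_gt0 Xfp]; apply: full_fp_of_block_fp X_gt0 Xfp. Qed.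

Lemma left_eigenvalue_extend j (u : B j -> R[i]) l :
  \sum_b u b = 0 -> (exists b, u b != 0) ->
  (forall c, \sum_b u b * (IminusW (Wk j) b c)%:C%C = l * u c) ->
  left_eigenvalue (IminusW W) l.
Proof.
move=> u_sum0 [t ut] uA; pose U v := if insub v is Some b then u b else 0.
have UE (b : B j) : U (val b) = u b by rewrite /U valK.
have U0 v : part v != j -> U v = 0 by move=> vj; rewrite /U insubF // (negPf vj).
exists U => [|c]; first by exists (val t); rewrite UE.
rewrite sum_blocks (bigD1 j) //= [X in _ + X]big1 ?addr0 => [|k kj]; last first.
  by apply: big1 => b _; rewrite U0 ?mul0r // part_val.
under eq_bigr do rewrite UE.
have [cj | cj] := eqVneq (part c) j.
  pose c' : B j := exist _ c (introT eqP cj).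
  rewrite -[c]/(val c') UE -uA; apply: eq_bigr => b _.
  by rewrite /IminusW ctln_component val_eqE.
(* outside block j the column of I - W is constant on block j, and u sums to zero *)
rewrite U0 // mulr0; transitivity ((\sum_b u b) * (- cross_weight (part c) j)%:C%C).
  rewrite mulr_suml; apply: eq_bigr => b _.
  have bc : (val b == c) = false by apply: contraNF cj => /eqP<-; rewrite part_val.
  by rewrite /IminusW bc sub0r ctln_cross part_val // eq_sym.
by rewrite u_sum0 mul0r.
Qed.

Lemma component_unstable j xj x : simple_graph G -> uniform_in_degree (Gk j) ->
  full_support xj -> ~ stable_fp (Wk j) xj -> full_support x -> ~ stable_fp W x.
Proof.
move=> Gsimple Gj_unif xj_full xj_unstable x_full /(stable_fp_full _ x_full) Wstable.
apply/xj_unstable/(stable_fp_full _ xj_full) => l [u [t ut] uA].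
have Gj_simple : simple_graph (Gk j) by move=> b; apply: Gsimple.
pose r := \sum_c IminusW (Wk j) t c.
have rowsum b : \sum_c IminusW (Wk j) b c = r.
  by rewrite /r !sum_IminusW (ctln_rowsum_uniform eps delta Gj_simple Gj_unif b t).
have [-> | l_neq_r] := eqVneq l r%:C%C.
  rewrite /= /r sum_IminusW.
  have : \sum_c Wk j t c <= 0 by apply: sumr_le0 => c _; apply: ctln_le0.
  lra.
apply/Wstable/(left_eigenvalue_extend _ _ uA); last by exists t.
exact: left_eigenvalue_rowsum rowsum uA l_neq_r.
Qed.

Lemma cross_weight_prod l k : (2 < m)%N -> l != k ->
  (1 - eps) * (1 + delta) <= cross_weight l k * cross_weight k l.
Proof.
move=> m_gt2 lk; have [delta_gt0 eps_gt0 eps_lt1 _] := legal_paramsP params.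
rewrite /cross_weight !succ_ordE.
have [lpk | _] := eqVneq l (ord_pred k); have [kpl | _] := eqVneq k (ord_pred l) => //=; try nra.
by have := ord_pred2_neq k m_gt2; rewrite -lpk -kpl eqxx.
Qed.

(* Uses eps (delta + 1) < delta, i.e. the upper bound on eps in legal_params. *)
Lemma clique_diag_prod_lt (P Q w : R) : 1 <= P -> 1 <= Q -> (1 - eps) * (1 + delta) <= w ->
  (eps + (1 - eps) * P) * (eps + (1 - eps) * Q) < w * (P * Q).
Proof.
move=> P_ge1 Q_ge1 w_ge; have [delta_gt0 eps_gt0 eps_lt1 eps_delta] := legal_paramsP params.
have eps' : 0 <= 1 - eps by lra.
have PQ1 : 0 <= (1 - eps) * ((delta + eps) * ((P - 1) * (Q - 1))).
  by do 2!apply: mulr_ge0 => //; [lra | apply: mulr_ge0; lra].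
have PQ2 : 0 <= (1 - eps) * (delta * ((P - 1) + (Q - 1))).
  by do 2!apply: mulr_ge0 => //; [lra | lra].
have PQw : 0 <= (w - (1 - eps) * (1 + delta)) * (P * Q).
  by apply: mulr_ge0; [lra | apply: mulr_ge0; lra].
lra.
Qed.

Section Cliques.
Hypothesis Gk_clique : forall k, is_clique (Gk k).

Definition block_size k : R := #|{: B k}|%:R.

Lemma block_size_ge1 k : 1 <= block_size k.
Proof. by rewrite ler1n card_block_gt0. Qed.

Lemma ctln_same_block v c : part v = part c -> v != c -> W v c = -1 + eps.
Proof.
move=> vc v_neq_c; pose bv : B (part c) := exist _ v (introT eqP vc).
have [_ Gcv] := @Gk_clique (part c) bv (exist _ c (eqxx _)) v_neq_c.
by rewrite /ctln (negPf v_neq_c) [G c v]Gcv.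
Qed.

Definition clique_quotient : 'M[R]_m := \matrix_(k, l)
  (if k == l then eps + (1 - eps) * block_size k else - cross_weight l k * block_size k).

Lemma clique_quotient_colsum k c :
  \sum_(v | part v == k) IminusW W v c = clique_quotient k (part c).
Proof.
rewrite mxE /block_size card_sig -sum1_card natr_sum mulr_sumr.
have [<- | kc] := eqVneq (part c) k.
  rewrite (bigD1 c) //= [in RHS](bigD1 c) ?inE //= {1}/IminusW {1}/ctln !eqxx subr0 mulr1n.
  have -> : \sum_(v | (part v == part c) && (v != c)) IminusW W v c =
            \sum_(v | (v \in [pred x | part x == part c]) && (v != c)) (1 - eps) * 1.
    apply: eq_bigr => v /andP[vc v_neq_c].
    by rewrite /IminusW (negPf v_neq_c) (ctln_same_block (eqP vc) v_neq_c) mulr1 sub0r opprD opprK.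
  lra.
rewrite mulr_sumr; apply: eq_bigr => v /eqP vk.
have vc : (v == c) = false by apply: contraNF kc => /eqP<-; rewrite vk.
have pvc : part v != part c by rewrite vk eq_sym.
by rewrite /IminusW vc sub0r ctln_cross // vk mulr1.
Qed.

Lemma clique_quotient_trace : (2 < m)%N ->
  \tr clique_quotient ^+ 2 <= \tr (clique_quotient *m clique_quotient).
Proof.
move=> m_gt2; apply: mxtrace_sqr_le => k l kl.
rewrite !mxE !eqxx (negPf kl) eq_sym (negPf kl) mulrACA mulrNN ltW //.
by apply: clique_diag_prod_lt; rewrite ?block_size_ge1 ?cross_weight_prod // eq_sym.
Qed.

Lemma clique_union_unstable x : (2 < m)%N -> full_support x -> ~ stable_fp W x.
Proof.
move=> m_gt2 x_full /(stable_fp_full _ x_full) Wstable.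
apply: (trace_sqr_not_pos_spectrum (ltnW m_gt2) (clique_quotient_trace m_gt2)) => l Ql.
exact/Wstable/(quotient_left_eigenvalue Gcu.1 clique_quotient_colsum Ql).
Qed.

Definition clique_drive (y : V -> R) k : R :=
  theta + (-1 + eps) * block_mass k y + block_input k y.

Lemma clique_fp_vertex y v : is_fixed_point W theta y ->
  eps * y v = Num.max 0 (clique_drive y (part v)).
Proof.
case=> y_ge0 yfix; have [_ eps_gt0 eps_lt1 _] := legal_paramsP params.
pose bv : B (part v) := exist _ v (eqxx _).
have row : \sum_j W v j * y j + theta = clique_drive y (part v) + (1 - eps) * y v.
  rewrite (ctln_row_blocks _ (erefl (part v))) /clique_drive /block_mass.
  rewrite (bigD1 bv) //= [in RHS](bigD1 bv) //= {1}/ctln eqxx mul0r add0r.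
  have -> : \sum_(b | b != bv) W v (val b) * y (val b) =
            (-1 + eps) * \sum_(b | b != bv) y (val b).
    by rewrite mulr_sumr; apply: eq_bigr => b b_neq_v; rewrite ctln_same_block ?part_val // eq_sym.
  ring.
have := yfix v; have := y_ge0 v; rewrite row; set h := clique_drive y (part v).
by case: (ltrP 0 h) => ?; case: (ltrP 0 (h + (1 - eps) * y v)) => ? ? ?; nra.
Qed.

Lemma clique_fp_block y k : is_fixed_point W theta y ->
  eps * block_mass k y = block_size k * Num.max 0 (clique_drive y k).
Proof.
move=> yfix; rewrite /block_mass mulr_sumr.
under eq_bigr => b _ do rewrite (clique_fp_vertex _ yfix) part_val.
by rewrite sumr_const /block_size mulr_natl.
Qed.

Lemma clique_driveE y k : (1 < m)%N -> clique_drive y k =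
  theta - (1 + delta) * \sum_l block_mass l y
  + (delta + eps) * (block_mass k y + block_mass (ord_pred k) y).
Proof. by move=> m_gt1; rewrite /clique_drive block_inputE //; ring. Qed.

Lemma clique_drive_gt0 y k : (1 < m)%N -> is_fixed_point W theta y -> 0 < clique_drive y k.
Proof.
move=> m_gt1 yfix; have [delta_gt0 eps_gt0 _ _] := legal_paramsP params.
set h := clique_drive y; set Y := fun k => block_mass k y.
have Y_ge0 l : 0 <= Y l by apply: sumr_ge0 => b _; case: yfix => y_ge0 _; apply: y_ge0.
have Y0 l : h l <= 0 -> Y l = 0.
  move=> hl; have := clique_fp_block l yfix; rewrite -/(Y l) max_l // mulr0.
  by move/eqP; rewrite mulf_eq0 gt_eqF //= => /eqP.
rewrite ltNge; apply/negP => hk.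
have [/existsP[k1 hk1] | /existsPn none] := boolP [exists l, 0 < h l].
  (* at a boundary (h j > 0 >= h (j - 1)) block j - 1 is silent, so
     h (j + 1) = h j + (delta + eps) Y (j + 1); feeding back
     eps Y (j + 1) = n (j + 1) h (j + 1) makes delta h (j + 1) negative *)
  have nhk : ~~ (0 < h k) by rewrite -leNgt.
  have [j /andP[hj hpj]] :=
    @cyclic_boundary _ (fun l => 0 < h l) (ex_intro _ k1 hk1) (ex_intro _ k nhk).
  rewrite -leNgt in hpj; set j' := ordS j.
  have hj' : h j' = h j + (delta + eps) * Y j'.
    have Ypj : block_mass (ord_pred j) y = 0 := Y0 _ hpj.
    by rewrite /h /Y !clique_driveE // ordSK Ypj /=; ring.
  have hj'_gt0 : 0 < h j' by rewrite hj'; have := Y_ge0 j'; nra.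
  have := clique_fp_block j' yfix; rewrite -/(Y j') max_r ?ltW // => eY.
  have e1 : eps * h j' = eps * h j + (delta + eps) * (block_size j' * h j').
    by rewrite {1}hj' mulrDr mulrCA eY.
  have e2 : h j' <= block_size j' * h j' by have := block_size_ge1 j'; nra.
  have e3 : (delta + eps) * h j' <= (delta + eps) * (block_size j' * h j').
    by rewrite ler_pM2l ?addr_gt0.
  nra.
have Yall l : Y l = 0 by apply: Y0; rewrite leNgt none.
move: hk (Yall k) (Yall (ord_pred k)); rewrite /h clique_driveE // big1 => [|l _]; last exact: Yall.
rewrite /Y /= => hk0 Yk Ypk; rewrite Yk Ypk !(mulr0, addr0, subr0) in hk0.
by have := lt_le_trans theta_gt0 hk0; rewrite ltxx.
Qed.

Lemma clique_union_fp_full y : (1 < m)%N -> is_fixed_point W theta y -> full_support y.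
Proof.
move=> m_gt1 yfix v; have [_ eps_gt0 _ _] := legal_paramsP params.
have drive_gt0 := clique_drive_gt0 (part v) m_gt1 yfix; have := clique_fp_vertex v yfix.
by rewrite max_r ?ltW // => e; rewrite -(pmulr_rgt0 _ eps_gt0) e.
Qed.

End Cliques.

End CyclicUnion.

Theorem theorem5 (R : realType) (V : finType) (m : nat) (part : V -> 'I_m)
  (G : rel V) (eps delta theta : R) :
  simple_graph G ->
  cyclic_union part G ->
  legal_params eps delta ->
  0 < theta ->
  ctln_nondegenerate (ctln G eps delta) theta ->
  (forall k : 'I_m, ctln_nondegenerate (ctln (cu_component part G k) eps delta) theta) ->
  [/\
   (* (i) *)
   ((exists k : 'I_m, ~ has_full_support_fp (cu_component part G k) eps delta theta) ->
      ~ has_full_support_fp G eps delta theta),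
   (* (ii) *)
   ((forall k : 'I_m, has_full_support_fp (cu_component part G k) eps delta theta) ->
    (exists k : 'I_m,
        uniform_in_degree (cu_component part G k) /\
        (forall x, is_fixed_point (ctln (cu_component part G k) eps delta) theta x ->
                   full_support x ->
                   ~ stable_fp (ctln (cu_component part G k) eps delta) x)) ->
    exists x, [/\ is_fixed_point (ctln G eps delta) theta x, full_support x
               & ~ stable_fp (ctln G eps delta) x]),
   (* (iii) *)
   ((2 < m)%N -> (forall k : 'I_m, is_clique (cu_component part G k)) ->
    exists x, [/\ is_fixed_point (ctln G eps delta) theta x, full_support x,
                 ~ stable_fp (ctln G eps delta) x
               & forall y, is_fixed_point (ctln G eps delta) theta y ->
                           forall i, y i = x i])
   & (* in particular *)
   (((exists k : 'I_m, ~ has_full_support_fp (cu_component part G k) eps delta theta)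
     \/ ((forall k : 'I_m, has_full_support_fp (cu_component part G k) eps delta theta) /\
         (exists k : 'I_m,
            uniform_in_degree (cu_component part G k) /\
            (forall x, is_fixed_point (ctln (cu_component part G k) eps delta) theta x ->
                       full_support x ->
                       ~ stable_fp (ctln (cu_component part G k) eps delta) x)))
     \/ ((2 < m)%N /\ forall k : 'I_m, is_clique (cu_component part G k))) ->
    ~ stable_motif G eps delta theta)].
Proof.
move=> Gsimple Gcu params theta_gt0 Wnd _.
have fp_of_components := full_fp_of_components Gcu params theta_gt0.
have unstable_of_component := component_unstable Gcu params Gsimple.
split.
- by move=> [k Gk_nofp] /(component_full_fp Gcu params theta_gt0 k).
- move=> Gk_fp [j [Gj_unif Gj_unstable]]; have [xj [xjfix xj_full]] := Gk_fp j.
  have [x [xfix x_full]] := fp_of_components Gk_fp.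
  exists x; split=> //.
  exact: unstable_of_component Gj_unif xj_full (Gj_unstable _ xjfix xj_full) x_full.
- move=> m_gt2 Gk_clique.
  have [x [xfix x_full]] : has_full_support_fp G eps delta theta.
    apply: fp_of_components => k.
    exact: clique_full_fp params theta_gt0 (Gk_clique k) (card_block_gt0 Gcu k).
  exists x; split=> //; first exact: (clique_union_unstable Gcu params Gk_clique m_gt2 x_full).
  move=> y yfix.
  have y_full := clique_union_fp_full Gcu params theta_gt0 Gk_clique (ltnW m_gt2) yfix.
  exact: full_fp_unique Wnd xfix x_full yfix y_full.
- case=> [[k Gk_nofp] | [[Gk_fp [j [Gj_unif Gj_unstable]]] | [m_gt2 Gk_clique]]].
  all: move=> [x [xfix x_full x_stable]].
  + exact/Gk_nofp/(component_full_fp Gcu params theta_gt0 k)/(ex_intro _ x (conj xfix x_full)).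
  + have [xj [xjfix xj_full]] := Gk_fp j.
    exact: unstable_of_component Gj_unif xj_full (Gj_unstable _ xjfix xj_full) x_full x_stable.
  + exact: (clique_union_unstable Gcu params Gk_clique m_gt2 x_full x_stable).
Qed.
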